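(* In the iAPG setting described in the context, assume $\mu>0$, fix $c\in(0,1)$ and $\varepsilon_0>0$, and suppose $\varepsilon_k=\frac{\varepsilon_0}{k+1}\sqrt{\prod_{j=0}^{k-1}(1-c\alpha_j)}$ for all $k\ge1$. Let $\kappa=\frac{L_g}{\gamma_{\mathrm{dec}}\mu}$, $\psi_0=F(x^{(0)})-F^*+(1-(1-c)\alpha_0)\frac{\gamma_0}{2}\|x^*-z^{(0)}\|^2$, $S=\frac{\sqrt\kappa}{2(1-c)^2\underline L}\sum_{k=0}^\infty\frac{\varepsilon_0^2}{(k+1)^2}$, and $\delta_k=\sqrt{\prod_{j=0}^{k-1}(1-c\alpha_j)}\sqrt{\frac{2(\psi_0+S)}{\mu}}$ (empty product $=1$). For $y\in\mathbb R^n$, $\eta>0$ define $\Phi(x;y,\eta)=\langle\nabla g(y),x-y\rangle+\frac1{2\eta}\|x-y\|^2+h(x)+r(x)$ and $x_*^{(k+1)}=\arg\min_x\Phi(x;y^{(k)},\eta_k)$. Then $$\Phi(x^{(k)};y^{(k)},\eta_k)-\Phi(x_*^{(k+1)};y^{(k)},\eta_k)\le\begin{cases}\frac1{2\underline L}\,\mathrm{dist}\big(0,\partial F(x^{(0)})\big)^2,& k=0,\\[2pt] \frac1{2\underline L}\Big(\varepsilon_{k-1}+\frac{3L_g(\delta_k+\delta_{k-1})}{\gamma_{\mathrm{dec}}\sqrt c}\Big)^2,& k\ge1.\end{cases}$$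
   Context: iAPG setting. Let $g,h:\mathbb R^n\to\mathbb R$ and $r:\mathbb R^n\to\mathbb R\cup\{+\infty\}$, where $g$ is convex, $\mu$-strongly convex for some $\mu\ge0$, and differentiable with $L_g$-Lipschitz gradient ($L_g>0$); $h$ is convex and differentiable with $L_h$-Lipschitz gradient; $r$ is proper, closed and convex. Put $H=h+r$, $F=g+H$, and assume $F$ attains its minimum value $F^*$ at some point $x^*$. Fix constants $\gamma_{\mathrm{dec}}\in(0,1)$ and $\underline L>0$ with $\mu\le\underline L\le L_g$. We consider points $x^{(k)},z^{(k)},y^{(k)}\in\mathbb R^n$ and scalars $\eta_k>0,\alpha_k>0,\gamma_k>0,\varepsilon_k\ge0$ ($k\ge0$) such that $x^{(0)}=z^{(0)}\in\mathrm{dom}(H)$, $\gamma_0\ge\mu$, and for every $k\ge0$: (i) $\gamma_{\mathrm{dec}}/L_g<\eta_k\le1/\underline L$; (ii) $\gamma_{k+1}=\alpha_k^2/\eta_k=(1-\alpha_k)\gamma_k+\alpha_k\mu$; (iii) $y^{(k)}=\frac{1}{\alpha_k\gamma_k+\gamma_{k+1}}\big(\alpha_k\gamma_k z^{(k)}+\gamma_{k+1}x^{(k)}\big)$; (iv) $\mathrm{dist}\big(0,\ \nabla g(y^{(k)})+\tfrac1{\eta_k}(x^{(k+1)}-y^{(k)})+\partial H(x^{(k+1)})\big)\le\varepsilon_k$; (v) $g(x^{(k+1)})\le g(y^{(k)})+\langle\nabla g(y^{(k)}),x^{(k+1)}-y^{(k)}\rangle+\frac1{2\eta_k}\|x^{(k+1)}-y^{(k)}\|^2$;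 (vi) $z^{(k+1)}=x^{(k)}+\frac1{\alpha_k}(x^{(k+1)}-x^{(k)})$. Here $\partial$ denotes the convex subdifferential and $\mathrm{dist}(0,S)=\inf_{s\in S}\|s\|$. *)

From HB Require Import structures.
From mathcomp Require Import all_boot all_order all_algebra.
From mathcomp Require Import all_classical all_reals all_analysis.
Set Implicit Arguments. Unset Strict Implicit. Unset Printing Implicit Defensive.
Import Order.TTheory GRing.Theory Num.Theory.
Local Open Scope classical_set_scope.
Local Open Scope ring_scope.

Section Defs.
Variables (R : realType) (n : nat).
Local Notation V := 'rV[R]_n.

Definition dot (u v : V) : R := \sum_(i < n) u 0 i * v 0 i.
Definition enorm (u : V) : R := Num.sqrt (dot u u).

Definition is_gradient (f : V -> R) (G : V -> V) : Prop :=
  forall x (e : R), 0 < e -> exists2 d : R, 0 < d &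
    forall h : V, enorm h < d ->
      `| f (x + h) - f x - dot (G x) h | <= e * enorm h.

Definition lipschitz_map (L : R) (G : V -> V) : Prop :=
  forall x y, enorm (G x - G y) <= L * enorm (x - y).

Definition convex_fun (f : V -> R) : Prop :=
  forall (x y : V) (t : R), 0 <= t <= 1 ->
    f (t *: x + (1 - t) *: y) <= t * f x + (1 - t) * f y.

Definition strongly_convex (mu : R) (f : V -> R) : Prop :=
  forall (x y : V) (t : R), 0 <= t <= 1 ->
    f (t *: x + (1 - t) *: y) <=
      t * f x + (1 - t) * f y - mu / 2 * t * (1 - t) * enorm (x - y) ^+ 2.

Definition proper_fun (f : V -> \bar R) : Prop :=
  (exists x, f x < +oo)%E /\ (forall x, f x != -oo%E).

Definition convex_efun (f : V -> \bar R) : Prop :=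
  forall (x y : V) (t : R), 0 < t < 1 ->
    (f (t *: x + (1 - t) *: y)%R <= t%:E * f x + (1 - t)%:E * f y)%E.

(* closed = lower semicontinuous (closed epigraph) *)
Definition closed_efun (f : V -> \bar R) : Prop :=
  forall x (a : R), (a%:E < f x)%E -> exists2 d : R, 0 < d &
    forall y, enorm (y - x) < d -> (a%:E < f y)%E.

Definition subdiff (f : V -> \bar R) (x : V) : set V :=
  [set s | f x \is a fin_num /\ forall y, (f x + (dot s (y - x)%R)%:E <= f y)%E].

(* dist(0, S) = inf_{s in S} ||s||  (= +oo if S is empty) *)
Definition dist0 (S : set V) : \bar R := ereal_inf [set (enorm s)%:E | s in S].

Definition Phi (dg : V -> V) (h : V -> R) (r : V -> \bar R)
    (x y : V) (eta : R) : \bar R :=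
  ((dot (dg y) (x - y) + (2 * eta)^-1 * enorm (x - y) ^+ 2 + h x)%R%:E + r x)%E.

End Defs.

(** The left-hand side is the gap of the proximal-gradient model [Phi(.; y_k, eta_k)]
    between [x_k] and its minimiser; completing the square bounds it by
    [eta_k/2 |v|^2] for every [v] in [grad g(y_k) + (x_k - y_k)/eta_k + dH(x_k)].
    For [k = 0] we have [y_0 = x_0], so [v] ranges over [dF(x_0)].  For [k >= 1],
    [v] is obtained from an inexact residual of step [k-1] (norm at most [eps_{k-1}])
    by correcting for the change of [y] and [eta]; by the Lipschitz continuity of
    [grad g] and [eta >= gdec/Lg] this costs at most [3 (Lg/gdec)] times distances
    from [x_k], [y_k], [y_{k-1}] to [x*].  These distances are at most [delta_k / sqrt c]:
    by strong convexity they are controlled by the Lyapunov function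
    [F(x_k) - F* + gamma_k/2 |z_k - x*|^2], which the estimate-sequence argument shows
    contracts by the factor [1 - c alpha_k] per step, up to the inexactness errors
    whose weighted sum is [S]. *)

From HB Require Import structures.
From mathcomp Require Import all_boot all_order all_algebra.
From mathcomp Require Import all_classical all_reals all_analysis.
From mathcomp Require Import ring lra.
Set Implicit Arguments. Unset Strict Implicit. Unset Printing Implicit Defensive.
Import Order.TTheory GRing.Theory Num.Theory.
Local Open Scope classical_set_scope.
Local Open Scope ring_scope.

Section RealApproximation.
Variable R : realType.
Implicit Types a b c m K C : R.

Lemma quadratic_ge0_discr_le a b c : 0 <= c ->
  (forall t, 0 <= a - 2 * t * b + t ^+ 2 * c) -> b ^+ 2 <= a * c.
Proof.
move=> c0 Hq; have [c00|cpos] := eqVneq c 0.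
  have [->|b0] := eqVneq b 0; first by rewrite c00; lra.
  have := Hq ((a + 1) / (2 * b)).
  have -> : a - 2 * ((a + 1) / (2 * b)) * b = -1 by field.
  rewrite c00; lra.
have cp : 0 < c by rewrite lt_def cpos c0.
have := Hq (b / c).
have -> : a - 2 * (b / c) * b + (b / c) ^+ 2 * c = (a * c - b ^+ 2) / c by field.
by rewrite pmulr_lge0 ?invr_gt0 // subr_ge0.
Qed.

Lemma ler_of_small_slack a b C : 0 <= C ->
  (forall e, 0 < e -> exists2 d, 0 < d &
     forall t, 0 < t -> t < d -> a <= b + e + t * C) -> a <= b.
Proof.
move=> C0 Hs; apply/ler_addgt0Pr => e e0.
have [d d0 Hd] := Hs (e / 2) ltac:(by rewrite divr_gt0).
have C1 : 0 < C + 1 by lra.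
pose t := Order.min (d / 2) (e / 2 / (C + 1)).
have t0 : 0 < t by rewrite lt_min !divr_gt0.
have td : t < d by rewrite gt_min ltr_pdivrMr //; lra.
have tC : t * (C + 1) <= e / 2 by rewrite -ler_pdivlMr // ge_min lexx orbT.
have := Hd t t0 td; rewrite mulrDr mulr1 in tC; lra.
Qed.

Lemma ler_mul_sqr_of_forall_gt a K m : 0 <= K -> 0 <= m ->
  (forall rho, 0 < rho -> a <= K * (m + rho) ^+ 2) -> a <= K * m ^+ 2.
Proof.
move=> K0 m0 Hr; apply/ler_addgt0Pr => e e0.
have M0 : 0 < K * (2 * m + 1) + 1 by rewrite ltr_pwDr // mulr_ge0 //; lra.
pose rho := Order.min 1 (e / (K * (2 * m + 1) + 1)).
have rho0 : 0 < rho by rewrite lt_min ltr01 divr_gt0.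
have rho1 : rho <= 1 by rewrite ge_min lexx.
have rhoM : rho * (K * (2 * m + 1) + 1) <= e.
  by rewrite -ler_pdivlMr // ge_min lexx orbT.
apply: (le_trans (Hr rho rho0)).
have -> : K * (m + rho) ^+ 2 = K * m ^+ 2 + rho * (K * (2 * m + rho)) by ring.
rewrite lerD2l; apply: le_trans rhoM; rewrite ler_pM2l //.
have : K * rho <= K by rewrite -[leRHS]mulr1 ler_wpM2l.
rewrite !mulrDr mulr1; lra.
Qed.

Lemma sum_recip_sqr_le k : \sum_(i < k) (i.+1%:R ^+ 2)^-1 <= 2 - 2 / k.+1%:R :> R.
Proof.
elim: k => [|k IH]; first by rewrite big_ord0 divr1 subrr.
rewrite big_ord_recr /=; apply: le_trans (lerD IH (lexx _)) _.
have k0 : 0 <= k%:R :> R by rewrite ler0n.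
have -> : k.+1%:R = k%:R + 1 :> R by rewrite -addn1 natrD.
have -> : k.+2%:R = k%:R + 2 :> R by rewrite -addn2 natrD.
rewrite -subr_ge0.
have -> : 2 - 2 / (k%:R + 2) - (2 - 2 / (k%:R + 1) + ((k%:R + 1) ^+ 2)^-1)
    = k%:R / ((k%:R + 1) ^+ 2 * (k%:R + 2)) :> R.
  by field; rewrite !gt_eqF //; lra.
by rewrite divr_ge0 // mulr_ge0 ?sqr_ge0 //; lra.
Qed.

Lemma psum_le_limn (u : nat -> R) (M : R) k : (forall i, 0 <= u i) ->
  (forall k, \sum_(i < k) u i <= M) ->
  \sum_(i < k) u i <= limn (fun k => \sum_(i < k) u i).
Proof.
move=> u0 uM; have psum_homo : {homo (fun k => \sum_(i < k) u i) : a b / (a <= b)%N >-> a <= b}.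
  by move=> a b ab; rewrite -(subnKC ab) big_split_ord /= lerDl sumr_ge0.
apply: nondecreasing_cvgn_le => //; apply: nondecreasing_is_cvgn => //.
by exists M => _ [j _ <-].
Qed.

End RealApproximation.

Section Euclidean.
Variables (R : realType) (n : nat).
Implicit Types (u v w : 'rV[R]_n) (a b : R).

Lemma dotC u v : dot u v = dot v u.
Proof. by apply: eq_bigr => i _; rewrite mulrC. Qed.

Lemma dot_ge0 u : 0 <= dot u u.
Proof. by apply: sumr_ge0 => i _; rewrite -expr2 sqr_ge0. Qed.

Lemma enorm_ge0 u : 0 <= enorm u.
Proof. exact: sqrtr_ge0. Qed.

Lemma enorm_sqr u : enorm u ^+ 2 = dot u u.
Proof. by rewrite sqr_sqrtr // dot_ge0. Qed.

Lemma dotDl u v w : dot (u + v) w = dot u w + dot v w.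
Proof. by rewrite /dot -big_split; apply: eq_bigr => i _; rewrite !mxE mulrDl. Qed.

Lemma dotZl a u w : dot (a *: u) w = a * dot u w.
Proof. by rewrite /dot mulr_sumr; apply: eq_bigr => i _; rewrite !mxE mulrA. Qed.

Lemma dotBl u v w : dot (u - v) w = dot u w - dot v w.
Proof. by rewrite dotDl -scaleN1r dotZl mulN1r. Qed.

Lemma dotZr a u w : dot w (a *: u) = a * dot w u.
Proof. by rewrite dotC dotZl dotC. Qed.

Lemma dotBr u v w : dot w (u - v) = dot w u - dot w v.
Proof. by rewrite dotC dotBl !(dotC w). Qed.

Lemma dotDr u v w : dot w (u + v) = dot w u + dot w v.
Proof. by rewrite dotC dotDl !(dotC w). Qed.

Lemma dot_sqr_le u v : dot u v ^+ 2 <= dot u u * dot v v.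
Proof.
rewrite mulrC; apply: quadratic_ge0_discr_le; first exact: dot_ge0.
move=> t; have := dot_ge0 (v - t *: u).
rewrite !(dotBl, dotBr, dotZl, dotZr) (dotC v u).
by congr (_ <= _); ring.
Qed.

Lemma dot_le_enorm u v : dot u v <= enorm u * enorm v.
Proof.
have [uv0|uv0] := ltP (dot u v) 0; first by rewrite (le_trans (ltW uv0)) ?mulr_ge0 ?enorm_ge0.
rewrite -sqrtrM ?dot_ge0 // -(ger0_norm uv0) -sqrtr_sqr ler_sqrt ?dot_sqr_le //.
by rewrite mulr_ge0 ?dot_ge0.
Qed.

Lemma dot_le_young u v a : 0 < a -> dot u v <= a / 2 * dot v v + (2 * a)^-1 * dot u u.
Proof.
move=> a0; have := dot_ge0 (a *: v - u).
rewrite !(dotBl, dotBr, dotZl, dotZr) (dotC v u) => Hsq.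
rewrite -subr_ge0.
have -> : a / 2 * dot v v + (2 * a)^-1 * dot u u - dot u v
  = (2 * a)^-1 * (a * (a * dot v v) - a * dot u v - (a * dot u v - dot u u)).
  by field; rewrite gt_eqF.
have a2 : 0 < (2 * a)^-1 by rewrite invr_gt0 mulr_gt0.
apply: mulr_ge0; first exact: ltW.
move: Hsq; rewrite (dotC u v); lra.
Qed.

Lemma enormZ a u : enorm (a *: u) = `|a| * enorm u.
Proof. by rewrite /enorm dotZl dotZr mulrA -expr2 sqrtrM ?sqr_ge0 // sqrtr_sqr. Qed.

Lemma enormN u : enorm (- u) = enorm u.
Proof. by rewrite -scaleN1r enormZ normrN1 mul1r. Qed.

Lemma enorm_distC u v : enorm (u - v) = enorm (v - u).
Proof. by rewrite -enormN opprB. Qed.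

Lemma enorm_le_sqr u b : 0 <= b -> dot u u <= b ^+ 2 -> enorm u <= b.
Proof.
by move=> b0 ub; rewrite /enorm -(ger0_norm b0) -sqrtr_sqr ler_sqrt // sqr_ge0.
Qed.

Lemma ler_enormD u v : enorm (u + v) <= enorm u + enorm v.
Proof.
apply: enorm_le_sqr; first by rewrite addr_ge0 ?enorm_ge0.
rewrite dotDl !dotDr (dotC v u) sqrrD !enorm_sqr.
have := dot_le_enorm u v; lra.
Qed.

Lemma ler_enormB u v : enorm (u - v) <= enorm u + enorm v.
Proof. by rewrite -(enormN v) ler_enormD. Qed.

Lemma ler_enorm_dist u v w : enorm (u - v) <= enorm (u - w) + enorm (v - w).
Proof.
have -> : u - v = (u - w) - (v - w) by rewrite opprB addrA subrK.
exact: ler_enormB.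
Qed.

Lemma ler_enorm_convex u v t b : 0 <= t <= 1 -> enorm u <= b -> enorm v <= b ->
  enorm (t *: u + (1 - t) *: v) <= b.
Proof.
move=> /andP[t0 t1] ub vb.
apply: (le_trans (ler_enormD _ _)); rewrite !enormZ !ger0_norm ?subr_ge0 //.
have : t * enorm u <= t * b by rewrite ler_wpM2l.
have : (1 - t) * enorm v <= (1 - t) * b by rewrite ler_wpM2l ?subr_ge0.
lra.
Qed.

End Euclidean.

(* Rewrites a combination of [dot]s into one sum over coordinates, so that vector
   identities reduce to [field] on each coordinate. *)
Ltac dot_expand :=
  rewrite /dot; do 4 rewrite ?(mulr_sumr, mulr_suml) -?sumrN -?big_split /=.

Section ProximalModel.
Variables (R : realType) (n : nat).
Implicit Types (G s x y u p e z : 'rV[R]_n).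

Lemma prox_model_gap G s x y u (eta Hx Hu : R) : 0 < eta -> Hx + dot s (u - x) <= Hu ->
  (dot G (x - y) + (2 * eta)^-1 * enorm (x - y) ^+ 2 + Hx)
  - (dot G (u - y) + (2 * eta)^-1 * enorm (u - y) ^+ 2 + Hu)
  <= eta / 2 * enorm (G + eta^-1 *: (x - y) + s) ^+ 2.
Proof.
move=> eta0 Hs; set v := G + eta^-1 *: (x - y) + s.
(* complete the square in [u]: the gap is [eta/2 |v|^2 - |eta v + u - x|^2 / (2 eta)] *)
have Esq : eta / 2 * dot v v
    - (dot G (x - y) + (2 * eta)^-1 * dot (x - y) (x - y)
       - dot G (u - y) - (2 * eta)^-1 * dot (u - y) (u - y)) + dot s (u - x)
  = (2 * eta)^-1 * dot (eta *: v + (u - x)) (eta *: v + (u - x)).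
  by rewrite /v; dot_expand; apply: eq_bigr => i _; rewrite !mxE; field; rewrite gt_eqF.
have : 0 <= (2 * eta)^-1 * dot (eta *: v + (u - x)) (eta *: v + (u - x)).
  by rewrite mulr_ge0 ?dot_ge0 // invr_ge0 mulr_ge0 // ltW.
rewrite !enorm_sqr; lra.
Qed.

Lemma estimate_sequence_identity x z xs zp y p e (al ga gp mu eta : R) :
  0 < al -> 0 < ga -> 0 < gp ->
  mu = (gp - (1 - al) * ga) / al -> eta = al ^+ 2 / gp ->
  y = (al * ga + gp)^-1 *: (al * ga *: z + gp *: x) ->
  zp = x + al^-1 *: (p - x) ->
  (1 - al) * (dot e (x - p) + eta^-1 * dot (y - p) (x - p) + mu / 2 * dot (x - y) (x - y))
  + al * (dot e (xs - p) + eta^-1 * dot (y - p) (xs - p) + mu / 2 * dot (xs - y) (xs - y))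
  - (2 * eta)^-1 * dot (p - y) (p - y)
  - (gp / 2 * dot (zp - xs) (zp - xs) - (1 - al) * ga / 2 * dot (z - xs) (z - xs)
     - al * dot e (zp - xs))
  = (1 - al) * mu / 2 * dot (x - y) (x - y)
    + (1 - al) * ga * al * mu / (2 * gp) * dot (z - y) (z - y).
Proof.
move=> al0 ga0 gp0 -> -> -> ->.
dot_expand; apply: eq_bigr => i _; rewrite !mxE.
by field; rewrite ?gt_eqF ?mulf_neq0 // addr_gt0 ?mulr_gt0.
Qed.

End ProximalModel.

Section ConvexAnalysis.
Variables (R : realType) (n : nat).
Local Notation V := 'rV[R]_n.
Implicit Types (f g h : V -> R) (G : V -> V) (r : V -> \bar R) (x y u v s : V).

Lemma proper_fin_num r v : proper_fun r -> (r v < +oo)%E -> r v \is a fin_num.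
Proof. by move=> [_ rNy] rv; rewrite fin_numE rNy -ltey. Qed.

Lemma proper_fin_num_le r v (a b : R) : proper_fun r ->
  (a%:E + r v <= b%:E)%E -> r v \is a fin_num.
Proof.
move=> [_ rNy] rvb; rewrite fin_numE rNy /=; apply/negP => /eqP rvy.
by move: rvb; rewrite rvy addey.
Qed.

Lemma subdiff_fine f r x s : subdiff (fun v => ((f v)%:E + r v)%E) x s ->
  r x \is a fin_num /\ forall u, r u \is a fin_num ->
    f x + fine (r x) + dot s (u - x) <= f u + fine (r u).
Proof.
move=> [fx Hs]; have rx : r x \is a fin_num by move: fx; rewrite fin_numD => /andP[].
split => // u ru; have := Hs u.
by rewrite -(fineK rx) -(fineK ru) -!EFinD lee_fin !fineK.
Qed.

Lemma convex_efun_fine r u w (t : R) : proper_fun r -> convex_efun r ->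
  r u \is a fin_num -> r w \is a fin_num -> 0 < t < 1 ->
  r (t *: u + (1 - t) *: w) \is a fin_num /\
  fine (r (t *: u + (1 - t) *: w)) <= t * fine (r u) + (1 - t) * fine (r w).
Proof.
move=> rp rc ru rw t01; have Hc := rc u w t t01.
rewrite -(fineK ru) -(fineK rw) -!EFinM -EFinD in Hc.
have rt : r (t *: u + (1 - t) *: w) \is a fin_num.
  by apply: proper_fin_num => //; apply: le_lt_trans Hc (ltry _).
by split => //; rewrite -lee_fin fineK.
Qed.

Lemma strongly_convexD (mu : R) f h : strongly_convex mu f -> convex_fun h ->
  strongly_convex mu (fun v => f v + h v).
Proof. by move=> fc hc u v t t01; have := fc u v t t01; have := hc u v t t01; lra. Qed.

Lemma gradient_dir f G : is_gradient f G -> forall x d (e : R), 0 < e ->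
  exists2 del : R, 0 < del & forall t, 0 < t -> t < del ->
    `|f (x + t *: d) - f x - t * dot (G x) d| <= e * t.
Proof.
move=> fG x d e e0; have N1 : 0 < enorm d + 1 by rewrite ltr_wpDl ?enorm_ge0.
have [del del0 Hd] := fG x (e / (enorm d + 1)) ltac:(by rewrite divr_gt0).
exists (del / (enorm d + 1)); first by rewrite divr_gt0.
move=> t t0; rewrite ltr_pdivlMr // => tdel.
have ntd : enorm (t *: d) = t * enorm d by rewrite enormZ ger0_norm // ltW.
have := Hd (t *: d); rewrite dotZr ntd => H1.
apply: le_trans (H1 _) _; first by apply: le_lt_trans tdel; rewrite ler_pM2l //; lra.
rewrite mulrA -subr_ge0.
have -> : e * t - e / (enorm d + 1) * t * enorm d = e * t / (enorm d + 1).
  by field; rewrite gt_eqF.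
by rewrite divr_ge0 ?mulr_ge0 // ltW.
Qed.

Lemma convex_comb_shift x u (t : R) : x + t *: (u - x) = t *: u + (1 - t) *: x.
Proof. by apply/rowP => i; rewrite !mxE; ring. Qed.

Lemma convex_comb_subr x u (t : R) : t *: u + (1 - t) *: x - x = t *: (u - x).
Proof. by apply/rowP => i; rewrite !mxE; ring. Qed.

Lemma strongly_convex_grad_le (mu : R) g G : 0 <= mu -> strongly_convex mu g ->
  is_gradient g G -> forall y u,
  g y + dot (G y) (u - y) + mu / 2 * dot (u - y) (u - y) <= g u.
Proof.
move=> mu0 gsc gG y u; set d := u - y; set D := dot d d.
apply: (@ler_of_small_slack _ _ _ (mu / 2 * D)); first by rewrite mulr_ge0 ?divr_ge0 ?dot_ge0.
move=> e e0; have [del del0 Hd] := gradient_dir gG y d e0.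
exists (Order.min del 1) => [|t t0]; first by rewrite lt_min del0 ltr01.
rewrite lt_min => /andP[tdel t1].
have := Hd t t0 tdel; rewrite convex_comb_shift => /ler_normlP[Hg _].
have := gsc u y t ltac:(by rewrite !ltW); rewrite enorm_sqr -/d -/D => Hsc.
suff : t * (g y + dot (G y) d + mu / 2 * D) <= t * (g u + e + t * (mu / 2 * D)).
  by rewrite ler_pM2l.
nra.
Qed.

Lemma subgradient_sub_grad g G h r x s : is_gradient g G -> convex_fun h ->
  proper_fun r -> convex_efun r -> r x \is a fin_num ->
  (forall v, r v \is a fin_num ->
     g x + h x + fine (r x) + dot s (v - x) <= g v + h v + fine (r v)) ->
  forall u, r u \is a fin_num ->
  h x + fine (r x) + dot (s - G x) (u - x) <= h u + fine (r u).
Proof.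
move=> gG hc rp rc rx Hs u ru; set d := u - x.
apply: (@ler_of_small_slack _ _ _ 0) => // e e0.
have [del del0 Hd] := gradient_dir gG x d e0.
exists (Order.min del 1) => [|t t0]; first by rewrite lt_min del0 ltr01.
rewrite lt_min => /andP[tdel t1].
have := Hd t t0 tdel; rewrite convex_comb_shift => /ler_normlP[_ Hg].
have [rw Hr] := convex_efun_fine (t := t) rp rc ru rx ltac:(by rewrite t0 t1).
have := Hs _ rw; rewrite convex_comb_subr dotZr -/d => Hm.
have := hc u x t ltac:(by rewrite !ltW) => Hh.
rewrite dotBl mulr0 addr0.
suff : t * (h x + fine (r x) + (dot s d - dot (G x) d)) <= t * (h u + fine (r u) + e).
  by rewrite ler_pM2l.
nra.
Qed.

Lemma quadratic_growth (mu : R) f r xs : 0 <= mu -> strongly_convex mu f ->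
  proper_fun r -> convex_efun r -> r xs \is a fin_num ->
  (forall v, r v \is a fin_num -> f xs + fine (r xs) <= f v + fine (r v)) ->
  forall u, r u \is a fin_num ->
  f xs + fine (r xs) + mu / 2 * dot (u - xs) (u - xs) <= f u + fine (r u).
Proof.
move=> mu0 fsc rp rc rxs xsmin u ru; set D := dot (u - xs) (u - xs).
apply: (@ler_of_small_slack _ _ _ (mu / 2 * D)); first by rewrite mulr_ge0 ?divr_ge0 ?dot_ge0.
move=> e e0; exists 1 => // t t0 t1.
have [rw Hr] := convex_efun_fine (t := t) rp rc ru rxs ltac:(by rewrite t0 t1).
have := xsmin _ rw; have := fsc u xs t ltac:(by rewrite !ltW).
rewrite enorm_sqr -/D => Hf Hm.
suff : t * (f xs + fine (r xs) + mu / 2 * D) <=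
       t * (f u + fine (r u) + e + t * (mu / 2 * D)) by rewrite ler_pM2l.
have : 0 <= t * e by rewrite mulr_ge0 // ltW.
nra.
Qed.

End ConvexAnalysis.

Section Distance.
Variables (R : realType) (n : nat).
Implicit Types (S : set 'rV[R]_n) (a e K T : R).

Lemma dist0_ge0 S : (0 <= dist0 S)%E.
Proof. by apply: le_ereal_inf_tmp => _ [s _ <-]; rewrite lee_fin enorm_ge0. Qed.

Lemma dist0_approx S e (rho : R) : (dist0 S <= e%:E)%E -> 0 < rho ->
  exists2 s, S s & enorm s < e + rho.
Proof.
move=> Se rho0; have : (dist0 S < (e + rho)%:E)%E.
  by apply: le_lt_trans Se _; rewrite lte_fin ltrDl.
by move=> /ereal_inf_lt[_ [s Ss <-]]; rewrite lte_fin; exists s.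
Qed.

Lemma le_dist0_sqr S a K T e : (dist0 S <= e%:E)%E -> 0 <= K -> 0 <= T ->
  (forall s, S s -> a <= K * (enorm s + T) ^+ 2) -> a <= K * (e + T) ^+ 2.
Proof.
move=> Se K0 T0 Hs; have e0 : 0 <= e by rewrite -lee_fin (le_trans (dist0_ge0 S)).
apply: ler_mul_sqr_of_forall_gt => // [|rho rho0]; first exact: addr_ge0.
have [s Ss sl] := dist0_approx Se rho0.
apply: (le_trans (Hs s Ss)); apply: ler_wpM2l => //.
rewrite ler_sqr ?nnegrE ?addr_ge0 ?enorm_ge0 ?(ltW rho0) //; lra.
Qed.

Lemma le_dist0_sqr_ereal S a K : 0 < K ->
  (forall s, S s -> a <= K * enorm s ^+ 2) -> (a%:E <= K%:E * (dist0 S * dist0 S))%E.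
Proof.
move=> K0 Hs; have := dist0_ge0 S; case Sm: (dist0 S) => [m| |] // m0.
- rewrite -!EFinM lee_fin -expr2 -[m]addr0.
  apply: (le_dist0_sqr (S := S)) => [||//|s /Hs]; last by rewrite addr0.
    by rewrite Sm.
  exact: ltW.
- by rewrite mulyy mulry gtr0_sg // mul1e leey.
Qed.

End Distance.

Section InexactAPG.
Variables (R : realType) (n : nat).
Local Notation V := 'rV[R]_n.
Variables (g h : V -> R) (r : V -> \bar R) (dg : V -> V).
Variables (mu Lg gdec Lund c : R) (xstar : V).
Variables (x z y : nat -> V) (eta alpha gamma eps : nat -> R).

Let F v := ((g v)%:E + ((h v)%:E + r v))%E.
Let Fr v := g v + h v + fine (r v).
Let subgradH p s := forall u, r u \is a fin_num ->
  h p + fine (r p) + dot s (u - p) <= h u + fine (r u).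
Let res k s := dg (y k) + (eta k)^-1 *: (x k.+1 - y k) + s.
Let rate k := \prod_(j < k) (1 - c * alpha j).

Hypotheses (mu_gt0 : 0 < mu) (Lg_gt0 : 0 < Lg).
Hypotheses (g_sconvex : strongly_convex mu g) (g_grad : is_gradient g dg)
  (g_lip : lipschitz_map Lg dg).
Hypotheses (h_convex : convex_fun h) (r_proper : proper_fun r) (r_convex : convex_efun r).
Hypothesis xstar_min : forall v, (F xstar <= F v)%E.
Hypotheses (gdec_gt0 : 0 < gdec) (gdec_le1 : gdec <= 1).
Hypotheses (Lund_gt0 : 0 < Lund) (mu_le_Lund : mu <= Lund).
Hypotheses (x0_z0 : x 0%N = z 0%N) (r_x0 : (r (x 0%N) < +oo)%E)
  (mu_le_gamma0 : mu <= gamma 0%N).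
Hypotheses (eta_gt0 : forall k, 0 < eta k) (alpha_gt0 : forall k, 0 < alpha k)
  (gamma_gt0 : forall k, 0 < gamma k).
Hypotheses (eta_gt : forall k, gdec / Lg < eta k) (eta_le : forall k, eta k <= Lund^-1).
Hypotheses (gammaS_eta : forall k, gamma k.+1 = alpha k ^+ 2 / eta k)
  (gammaS : forall k, gamma k.+1 = (1 - alpha k) * gamma k + alpha k * mu).
Hypothesis y_def : forall k,
  y k = (alpha k * gamma k + gamma k.+1)^-1 *: (alpha k * gamma k *: z k + gamma k.+1 *: x k).
Hypothesis residual_small : forall k,
  (dist0 [set res k s | s in subdiff (fun v => ((h v)%:E + r v)%E) (x k.+1)] <= (eps k)%:E)%E.
Hypothesis descent : forall k, g (x k.+1) <= g (y k) + dot (dg (y k)) (x k.+1 - y k)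
  + (2 * eta k)^-1 * enorm (x k.+1 - y k) ^+ 2.
Hypothesis z_def : forall k, z k.+1 = x k + (alpha k)^-1 *: (x k.+1 - x k).
Hypotheses (c_gt0 : 0 < c) (c_lt1 : c < 1).
Hypothesis eps_def : forall k, (1 <= k)%N -> eps k = eps 0%N / k.+1%:R * Num.sqrt (rate k).

Lemma F_fine v : r v \is a fin_num -> F v = (Fr v)%:E.
Proof. by move=> rv; rewrite /F /Fr -[r v](fineK rv) -!EFinD addrA. Qed.

Lemma F_EFinD : F = fun v => ((g v + h v)%:E + r v)%E.
Proof. by apply/funext => v; rewrite /F EFinD addeA. Qed.

Lemma r_fin_x k : r (x k) \is a fin_num.
Proof.
case: k => [|k]; first exact: proper_fin_num.
have [_ [s /subdiff_fine[] //]] := dist0_approx (residual_small k) ltr01.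
Qed.

Lemma r_fin_xstar : r xstar \is a fin_num.
Proof.
have := xstar_min (x 0%N); rewrite (F_fine (r_fin_x 0)) F_EFinD /=.
exact: proper_fin_num_le.
Qed.

Lemma Fr_xstar_le v : r v \is a fin_num -> Fr xstar <= Fr v.
Proof. by move=> rv; rewrite -lee_fin -(F_fine rv) -(F_fine r_fin_xstar). Qed.

Lemma alpha_le1_of_gamma k : mu <= gamma k -> alpha k <= 1.
Proof.
move=> mu_gk; have e0 := eta_gt0 k; have a0 := alpha_gt0 k.
have eta_mu : eta k * mu <= 1.
  have : eta k * mu <= Lund^-1 * Lund by apply: ler_pM; rewrite ?(ltW e0) ?(ltW mu_gt0).
  by rewrite mulVf ?gt_eqF.
have a2 : alpha k ^+ 2 = eta k * gamma k.+1 by rewrite gammaS_eta; field; rewrite gt_eqF.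
rewrite leNgt; apply/negP => a1.
have gS_mu : gamma k.+1 <= mu by rewrite gammaS; nra.
have : eta k * gamma k.+1 <= eta k * mu by rewrite ler_pM2l.
nra.
Qed.

Lemma gamma_ge_mu k : mu <= gamma k.
Proof.
elim: k => [//|k IH]; have := alpha_le1_of_gamma IH; have := alpha_gt0 k.
rewrite gammaS; nra.
Qed.

Lemma alpha_le1 k : alpha k <= 1.
Proof. exact/alpha_le1_of_gamma/gamma_ge_mu. Qed.

Lemma rate_ge0 k : 0 <= rate k.
Proof.
apply: prodr_ge0 => j _; have := alpha_le1 j.
have : c * alpha j <= alpha j by rewrite ler_piMl ?ltW.
lra.
Qed.

Lemma residual_subgrad k v :
  [set res k s | s in subdiff (fun v => ((h v)%:E + r v)%E) (x k.+1)] v ->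
  exists2 s, subgradH (x k.+1) s & v = res k s.
Proof. by move=> [s /subdiff_fine[_ Hs] <-]; exists s. Qed.

Lemma prox_grad_ineq k s u : subgradH (x k.+1) s -> r u \is a fin_num ->
  Fr (x k.+1) + dot (res k s) (u - x k.+1) + (eta k)^-1 * dot (y k - x k.+1) (u - x k.+1)
  - (2 * eta k)^-1 * dot (x k.+1 - y k) (x k.+1 - y k) + mu / 2 * dot (u - y k) (u - y k)
  <= Fr u.
Proof.
move=> Hs ru; set p := x k.+1.
have key : dot (res k s) (u - p) + (eta k)^-1 * dot (y k - p) (u - p)
    = dot (dg (y k)) (u - y k) - dot (dg (y k)) (p - y k) + dot s (u - p).
  by rewrite /res; dot_expand; apply: eq_bigr => i _; rewrite !mxE; field; rewrite gt_eqF.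
have := strongly_convex_grad_le (ltW mu_gt0) g_sconvex g_grad (y k) u.
have := Hs u ru; have := descent k; rewrite enorm_sqr /Fr; lra.
Qed.

Let lyap k := Fr (x k) - Fr xstar + gamma k / 2 * dot (z k - xstar) (z k - xstar).

Lemma lyap_ge0 k : 0 <= lyap k.
Proof.
have := Fr_xstar_le (r_fin_x k); have := gamma_gt0 k.
have := dot_ge0 (z k - xstar); rewrite /lyap; nra.
Qed.

Lemma lyap_step_exact k s : subgradH (x k.+1) s ->
  lyap k.+1 <= (1 - alpha k) * lyap k + alpha k * dot (res k s) (z k.+1 - xstar).
Proof.
move=> Hs; have a0 := alpha_gt0 k; have a1 := alpha_le1 k; have gp0 := gamma_gt0 k.+1.
have mu_def : mu = (gamma k.+1 - (1 - alpha k) * gamma k) / alpha k.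
  by rewrite gammaS; field; rewrite gt_eqF.
have eta_def : eta k = alpha k ^+ 2 / gamma k.+1.
  by rewrite gammaS_eta; field; rewrite ?gt_eqF ?exprn_gt0.
have := estimate_sequence_identity xstar (res k s) a0 (gamma_gt0 k) gp0
  mu_def eta_def (y_def k) (z_def k).
have a1' : 0 <= 1 - alpha k by rewrite subr_ge0.
have g0 := ltW (gamma_gt0 k); have m0 := ltW mu_gt0.
have cx : 0 <= (1 - alpha k) * mu / 2 by rewrite divr_ge0 ?mulr_ge0.
have cz : 0 <= (1 - alpha k) * gamma k * alpha k * mu / (2 * gamma k.+1).
  by rewrite divr_ge0 ?mulr_ge0 // ltW.
have := addr_ge0 (mulr_ge0 cx (dot_ge0 (x k - y k))) (mulr_ge0 cz (dot_ge0 (z k - y k))).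
have := ler_wpM2l a1' (prox_grad_ineq Hs (r_fin_x k)).
have := ler_wpM2l (ltW a0) (prox_grad_ineq Hs r_fin_xstar).
rewrite /lyap; lra.
Qed.

Lemma lyap_step k : (1 - (1 - c) * alpha k) * lyap k.+1
  <= (1 - alpha k) * lyap k + alpha k / (2 * (1 - c) * gamma k.+1) * eps k ^+ 2.
Proof.
have a0 := alpha_gt0 k; have gp0 := gamma_gt0 k.+1.
have cg0 : 0 < (1 - c) * gamma k.+1 by rewrite mulr_gt0 // subr_gt0.
rewrite -lerBlDl -[eps k]addr0.
apply: (le_dist0_sqr (residual_small k)) => //.
  by rewrite divr_ge0 ?ltW // -mulrA mulr_gt0.
move=> _ /residual_subgrad[s Hs ->]; rewrite addr0 enorm_sqr -mulrA.
(* Young's inequality with weight [(1 - c) gamma_{k+1}] absorbs the residual term into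
   the part of the decrease that is given up by contracting only with [1 - (1 - c) alpha_k]. *)
have := ler_wpM2l (ltW a0) (dot_le_young (res k s) (z k.+1 - xstar) cg0).
have := lyap_step_exact Hs.
have : 0 <= (1 - c) * alpha k * (Fr (x k.+1) - Fr xstar).
  by rewrite !mulr_ge0 ?subr_ge0 ?Fr_xstar_le ?r_fin_x // ?ltW.
rewrite /lyap; lra.
Qed.

Let kappa := Lg / (gdec * mu).
Let K0 := Num.sqrt kappa / (2 * (1 - c) ^+ 2 * Lund).
Let tol_sum k := \sum_(i < k) eps 0%N ^+ 2 / i.+1%:R ^+ 2.
Let psi0 := fine (F (x 0%N) - F xstar)%E
  + (1 - (1 - c) * alpha 0%N) * (gamma 0%N / 2) * enorm (xstar - z 0%N) ^+ 2.
Let S := K0 * limn tol_sum.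

Lemma eps_sqr k : eps k ^+ 2 = eps 0%N ^+ 2 * rate k / k.+1%:R ^+ 2.
Proof.
case: k => [|k]; first by rewrite /rate big_ord0 mulr1 mulr1n expr1n divr1.
by rewrite eps_def // exprMn sqr_sqrtr ?rate_ge0 // expr_div_n mulrAC.
Qed.

Lemma K0_ge0 : 0 <= K0.
Proof. by rewrite /K0 divr_ge0 ?sqrtr_ge0 // mulr_ge0 ?(ltW Lund_gt0) // mulr_ge0 ?sqr_ge0. Qed.

Lemma alpha_div_gamma_le k : alpha k / gamma k.+1 <= Num.sqrt kappa / Lund.
Proof.
have e0 := eta_gt0 k; have a0 := alpha_gt0 k.
have a2 : alpha k ^+ 2 = eta k * gamma k.+1 by rewrite gammaS_eta; field; rewrite gt_eqF.
have -> : alpha k / gamma k.+1 = eta k / alpha k by rewrite gammaS_eta; field; rewrite !gt_eqF.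
have inv_alpha : (alpha k)^-1 <= Num.sqrt kappa.
  have p0 : 0 < gdec / Lg * mu by rewrite !mulr_gt0 ?invr_gt0.
  have -> : kappa = (gdec / Lg * mu)^-1 by rewrite /kappa; field; rewrite !gt_eqF.
  rewrite -[leLHS]ger0_norm ?invr_ge0 ?(ltW a0) // -sqrtr_sqr ler_sqrt; last first.
    by rewrite invr_ge0 ltW.
  rewrite exprVn lef_pV2 ?posrE ?exprn_gt0 // a2.
  apply: ler_pM; rewrite ?(ltW (eta_gt k)) ?gamma_ge_mu ?(ltW mu_gt0) //.
  by rewrite divr_ge0 ?ltW.
rewrite [leRHS]mulrC; apply: ler_pM => //; first exact: ltW.
by rewrite invr_ge0 ltW.
Qed.

Lemma lyap_step_coef_le k : alpha k / (2 * (1 - c) * gamma k.+1)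
  <= (1 - c * alpha k) * (1 - (1 - c) * alpha k) * (K0 / c).
Proof.
have a0 := alpha_gt0 k; have a1 := alpha_le1 k; have gp0 := gamma_gt0 k.+1.
have c1 : 0 < 1 - c by rewrite subr_gt0.
have coef_le : alpha k / (2 * (1 - c) * gamma k.+1) <= (1 - c) * K0.
  have -> : (1 - c) * K0 = Num.sqrt kappa / Lund / (2 * (1 - c)).
    by rewrite /K0; field; rewrite !gt_eqF.
  have -> : alpha k / (2 * (1 - c) * gamma k.+1) = alpha k / gamma k.+1 / (2 * (1 - c)).
    by field; rewrite !gt_eqF.
  by apply: ler_wpM2r (alpha_div_gamma_le k); rewrite invr_ge0 mulr_ge0 // ltW.
apply: le_trans coef_le _.
have -> : (1 - c) * K0 = c * (1 - c) * (K0 / c) by field; rewrite gt_eqF.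
apply: ler_wpM2r; first by rewrite divr_ge0 ?K0_ge0 ?ltW.
rewrite -subr_ge0.
have -> : (1 - c * alpha k) * (1 - (1 - c) * alpha k) - c * (1 - c)
  = (1 - alpha k) * (1 - c * (1 - c) * (1 + alpha k)) by ring.
have cc : c * (1 - c) <= 1 / 4 by have := sqr_ge0 (2 * c - 1); lra.
have cc0 : 0 <= c * (1 - c) by rewrite mulr_ge0 ?ltW.
rewrite mulr_ge0 ?subr_ge0 //; nra.
Qed.

Lemma lyap_succ_le k : lyap k.+1 <= (1 - c * alpha k) * (lyap k + K0 / c * eps k ^+ 2).
Proof.
have a0 := alpha_gt0 k; have a1 := alpha_le1 k.
have d0 : 0 < 1 - (1 - c) * alpha k.
  have : (1 - c) * alpha k <= 1 - c by rewrite ler_piMr // subr_ge0 ltW.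
  have := c_gt0; lra.
rewrite -(ler_pM2l d0); apply: le_trans (lyap_step k) _.
have : (1 - alpha k) * lyap k <= (1 - c * alpha k) * (1 - (1 - c) * alpha k) * lyap k.
  apply: ler_wpM2r; first exact: lyap_ge0.
  rewrite -subr_ge0.
  have -> : (1 - c * alpha k) * (1 - (1 - c) * alpha k) - (1 - alpha k)
    = c * (1 - c) * alpha k ^+ 2 by ring.
  by rewrite !mulr_ge0 ?sqr_ge0 ?subr_ge0 // ltW.
have := ler_wpM2r (sqr_ge0 (eps k)) (lyap_step_coef_le k).
lra.
Qed.

Lemma lyap_le k : lyap k <= rate k * (lyap 0%N + K0 / c * tol_sum k).
Proof.
elim: k => [|k IH]; first by rewrite /rate /tol_sum !big_ord0 mul1r mulr0 addr0.
apply: le_trans (lyap_succ_le k) _.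
have -> : rate k.+1 = rate k * (1 - c * alpha k) by rewrite /rate big_ord_recr.
have -> : tol_sum k.+1 = tol_sum k + eps 0%N ^+ 2 / k.+1%:R ^+ 2.
  by rewrite /tol_sum big_ord_recr.
have -> : rate k * (1 - c * alpha k) * (lyap 0%N + K0 / c * (tol_sum k + eps 0%N ^+ 2 / k.+1%:R ^+ 2))
  = (1 - c * alpha k) * (rate k * (lyap 0%N + K0 / c * tol_sum k)
    + K0 / c * (eps 0%N ^+ 2 * rate k / k.+1%:R ^+ 2)) by ring.
rewrite eps_sqr ler_wpM2l ?lerD2r //.
have := alpha_le1 k; have : c * alpha k <= alpha k by rewrite ler_piMl ?ltW.
lra.
Qed.

Lemma tol_sum_le_limn k : tol_sum k <= limn tol_sum.
Proof.
apply: (psum_le_limn (u := fun i => eps 0%N ^+ 2 / i.+1%:R ^+ 2) (M := 2 * eps 0%N ^+ 2)).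
  by move=> i; rewrite divr_ge0 ?sqr_ge0.
move=> j.
rewrite -mulr_sumr [leRHS]mulrC ler_wpM2l ?sqr_ge0 //.
by apply: le_trans (sum_recip_sqr_le _ j) _; rewrite gerBl divr_ge0.
Qed.

Lemma S_ge0 : 0 <= S.
Proof.
rewrite mulr_ge0 ?K0_ge0 //; apply: le_trans (tol_sum_le_limn 0).
by rewrite /tol_sum big_ord0.
Qed.

Lemma c_lyap0_le : c * lyap 0%N <= psi0.
Proof.
rewrite /psi0 (F_fine (r_fin_x 0)) (F_fine r_fin_xstar) -EFinB /= enorm_distC enorm_sqr.
have Fx0 := Fr_xstar_le (r_fin_x 0); have c1 : 0 <= 1 - c by rewrite subr_ge0 ltW.
have D0 : 0 <= gamma 0%N / 2 * dot (z 0%N - xstar) (z 0%N - xstar).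
  by rewrite mulr_ge0 ?dot_ge0 // divr_ge0 // ltW.
have := mulr_ge0 (mulr_ge0 c1 (_ : 0 <= 1 - alpha 0%N)) D0.
have := mulr_ge0 c1 (_ : 0 <= Fr (x 0%N) - Fr xstar).
rewrite !subr_ge0 Fx0 alpha_le1 /lyap; lra.
Qed.

Lemma lyap_bound k : lyap k <= rate k * ((psi0 + S) / c).
Proof.
apply: le_trans (lyap_le k) _; rewrite ler_wpM2l ?rate_ge0 // mulrDl.
apply: lerD; first by rewrite ler_pdivlMr // mulrC c_lyap0_le.
rewrite /S mulrAC; apply: ler_wpM2r; first by rewrite invr_ge0 ltW.
by apply: ler_wpM2l; [exact: K0_ge0 | exact: tol_sum_le_limn].
Qed.

Let delta k := Num.sqrt (rate k) * Num.sqrt (2 * (psi0 + S) / mu).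

Lemma psi0S_ge0 : 0 <= psi0 + S.
Proof.
rewrite addr_ge0 ?S_ge0 //; apply: le_trans c_lyap0_le.
by rewrite mulr_ge0 ?lyap_ge0 // ltW.
Qed.

Let radius k := delta k / Num.sqrt c.

Lemma enorm_le_radius v k : mu / 2 * dot (v - xstar) (v - xstar) <= lyap k ->
  enorm (v - xstar) <= radius k.
Proof.
move=> Hv; have M0 : 0 <= 2 * (psi0 + S) / mu.
  by rewrite divr_ge0 ?mulr_ge0 ?psi0S_ge0 // ltW.
apply: enorm_le_sqr; first by rewrite divr_ge0 ?mulr_ge0 ?sqrtr_ge0.
rewrite expr_div_n exprMn !sqr_sqrtr ?rate_ge0 //; last exact: ltW.
have -> : rate k * (2 * (psi0 + S) / mu) / c = 2 / mu * (rate k * ((psi0 + S) / c)) by ring.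
have -> : dot (v - xstar) (v - xstar) = 2 / mu * (mu / 2 * dot (v - xstar) (v - xstar)).
  by field; rewrite gt_eqF.
by apply: ler_wpM2l; [rewrite divr_ge0 // ltW | exact: le_trans Hv (lyap_bound k)].
Qed.

Lemma dist_x_le k : enorm (x k - xstar) <= radius k.
Proof.
apply: enorm_le_radius.
have /= := quadratic_growth (ltW mu_gt0) (strongly_convexD g_sconvex h_convex)
  r_proper r_convex r_fin_xstar (fun v rv => Fr_xstar_le rv) (r_fin_x k).
have : 0 <= gamma k / 2 * dot (z k - xstar) (z k - xstar).
  by rewrite mulr_ge0 ?dot_ge0 // divr_ge0 // ltW.
rewrite /lyap /Fr; lra.
Qed.

Lemma dist_z_le k : enorm (z k - xstar) <= radius k.
Proof.
apply: enorm_le_radius; have := Fr_xstar_le (r_fin_x k).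
have : mu / 2 * dot (z k - xstar) (z k - xstar) <= gamma k / 2 * dot (z k - xstar) (z k - xstar).
  by apply: ler_wpM2r; rewrite ?dot_ge0 // ler_pM2r ?gamma_ge_mu.
rewrite /lyap; lra.
Qed.

Lemma dist_y_le k : enorm (y k - xstar) <= radius k.
Proof.
have ag0 : 0 < alpha k * gamma k by rewrite mulr_gt0.
have den : 0 < alpha k * gamma k + gamma k.+1 by rewrite addr_gt0.
pose th := alpha k * gamma k / (alpha k * gamma k + gamma k.+1).
have -> : y k - xstar = th *: (z k - xstar) + (1 - th) *: (x k - xstar).
  by rewrite y_def; apply/rowP => i; rewrite !mxE /th; field; rewrite gt_eqF.
apply: ler_enorm_convex; rewrite ?dist_z_le ?dist_x_le //.
rewrite /th divr_ge0 ?(ltW ag0) ?(ltW den) //= ler_pdivrMr // mul1r lerDl.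
exact/ltW/gamma_gt0.
Qed.

Lemma radius_ge0 k : 0 <= radius k.
Proof. by rewrite divr_ge0 ?mulr_ge0 ?sqrtr_ge0. Qed.

Lemma radius_le k : radius k.+1 <= radius k.
Proof.
rewrite /radius /delta ler_wpM2r ?invr_ge0 ?sqrtr_ge0 // ler_wpM2r ?sqrtr_ge0 // ler_wsqrtr // /rate big_ord_recr /=.
by rewrite ler_piMr ?rate_ge0 // gerBl mulr_ge0 // ltW.
Qed.

Lemma inv_eta_le k : (eta k)^-1 <= Lg / gdec.
Proof. by rewrite -invf_div lef_pV2 ?posrE ?divr_gt0 // ltW. Qed.

Lemma residual_shift_le k s :
  enorm (dg (y k.+1) + (eta k.+1)^-1 *: (x k.+1 - y k.+1) + s)
  <= enorm (res k s) + 3 * Lg * (delta k.+1 + delta k) / (gdec * Num.sqrt c).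
Proof.
pose M := Lg / gdec; have sc0 : 0 < Num.sqrt c by rewrite sqrtr_gt0.
have -> : 3 * Lg * (delta k.+1 + delta k) / (gdec * Num.sqrt c)
    = 3 * M * (radius k.+1 + radius k).
  by rewrite /M /radius; field; rewrite !gt_eqF.
have -> : dg (y k.+1) + (eta k.+1)^-1 *: (x k.+1 - y k.+1) + s
    = res k s + (dg (y k.+1) - dg (y k))
      + ((eta k.+1)^-1 *: (x k.+1 - y k.+1) - (eta k)^-1 *: (x k.+1 - y k)).
  by rewrite /res; apply/rowP => i; rewrite !mxE; ring.
have LM : Lg <= M by rewrite ler_pdivlMr // ler_piMr // ltW.
have rS := radius_le k; have r0 := radius_ge0 k.+1.
have dyy : enorm (y k.+1 - y k) <= radius k.+1 + radius k.
  by apply: le_trans (ler_enorm_dist _ _ xstar) _; rewrite lerD ?dist_y_le.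
have dxy : enorm (x k.+1 - y k.+1) <= radius k.+1 + radius k.
  apply: le_trans (ler_enorm_dist _ _ xstar) _.
  by have := dist_x_le k.+1; have := dist_y_le k.+1; lra.
have dxy' : enorm (x k.+1 - y k) <= radius k.+1 + radius k.
  by apply: le_trans (ler_enorm_dist _ _ xstar) _; rewrite lerD ?dist_x_le ?dist_y_le.
have scaled_le (j : nat) (u : V) : enorm u <= radius k.+1 + radius k ->
    enorm ((eta j)^-1 *: u) <= M * (radius k.+1 + radius k).
  have e0 := ltW (eta_gt0 j).
  move=> ub; rewrite enormZ ger0_norm ?invr_ge0 //.
  by apply: ler_pM; rewrite ?invr_ge0 ?enorm_ge0 ?inv_eta_le.
have t1 : enorm (dg (y k.+1) - dg (y k)) <= M * (radius k.+1 + radius k).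
  apply: le_trans (g_lip _ _) _.
  by apply: ler_pM; rewrite ?enorm_ge0 ?(ltW Lg_gt0).
have := scaled_le k.+1 _ dxy; have := scaled_le k _ dxy'.
have := ler_enormB ((eta k.+1)^-1 *: (x k.+1 - y k.+1)) ((eta k)^-1 *: (x k.+1 - y k)).
have := ler_enormD (res k s) (dg (y k.+1) - dg (y k)).
have := ler_enormD (res k s + (dg (y k.+1) - dg (y k)))
  ((eta k.+1)^-1 *: (x k.+1 - y k.+1) - (eta k)^-1 *: (x k.+1 - y k)).
lra.
Qed.

Let phi k v := dot (dg (y k)) (v - y k) + (2 * eta k)^-1 * enorm (v - y k) ^+ 2
  + (h v + fine (r v)).
Let argmin_Phi k xs := forall v, (Phi dg h r xs (y k) (eta k) <= Phi dg h r v (y k) (eta k))%E.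

Lemma Phi_fine k v : r v \is a fin_num -> Phi dg h r v (y k) (eta k) = (phi k v)%:E.
Proof. by move=> rv; rewrite /Phi /phi -[r v](fineK rv) -EFinD /= addrA. Qed.

Lemma r_fin_argmin k xs : argmin_Phi k xs -> r xs \is a fin_num.
Proof. by move=> /(_ (x k)); rewrite (Phi_fine k (r_fin_x k)); apply: proper_fin_num_le. Qed.

Lemma phi_gap_le k xs s : r xs \is a fin_num -> subgradH (x k) s ->
  phi k (x k) - phi k xs
  <= (2 * Lund)^-1 * enorm (dg (y k) + (eta k)^-1 *: (x k - y k) + s) ^+ 2.
Proof.
move=> rxs Hs; apply: le_trans (prox_model_gap _ _ (eta_gt0 k) (Hs xs rxs)) _.
apply: ler_wpM2r; first exact: sqr_ge0.
by rewrite invfM [leRHS]mulrC ler_pM2r ?invr_gt0.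
Qed.

Lemma Phi_gap_le0 xs : argmin_Phi 0 xs ->
  (Phi dg h r (x 0%N) (y 0%N) (eta 0%N) - Phi dg h r xs (y 0%N) (eta 0%N)
   <= ((2 * Lund)^-1)%:E * (dist0 (subdiff F (x 0%N)) * dist0 (subdiff F (x 0%N))))%E.
Proof.
move=> /r_fin_argmin rxs; rewrite (Phi_fine 0 (r_fin_x 0)) (Phi_fine 0 rxs) -EFinB.
apply: le_dist0_sqr_ereal; first by rewrite invr_gt0 mulr_gt0.
move=> s; rewrite F_EFinD => /subdiff_fine[_ Hs].
have y0 : y 0%N = x 0%N.
  have := alpha_gt0 0; have := gamma_gt0 0; have := gamma_gt0 1 => ? ? ?.
  rewrite y_def -x0_z0; apply/rowP => i; rewrite !mxE; field.
  by rewrite gt_eqF // addr_gt0 ?mulr_gt0.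
have := phi_gap_le rxs (subgradient_sub_grad g_grad h_convex r_proper r_convex (r_fin_x 0) Hs).
by rewrite y0 subrr scaler0 addr0 subrKC.
Qed.

Lemma Phi_gap_leS k xs : argmin_Phi k.+1 xs ->
  (Phi dg h r (x k.+1) (y k.+1) (eta k.+1) - Phi dg h r xs (y k.+1) (eta k.+1)
   <= ((2 * Lund)^-1 * (eps k + 3 * Lg * (delta k.+1 + delta k) / (gdec * Num.sqrt c)) ^+ 2)%:E)%E.
Proof.
move=> /r_fin_argmin rxs; rewrite (Phi_fine _ (r_fin_x _)) (Phi_fine _ rxs) -EFinB lee_fin.
have T0 : 0 <= 3 * Lg * (delta k.+1 + delta k) / (gdec * Num.sqrt c).
  have d0 j : 0 <= delta j by rewrite mulr_ge0 ?sqrtr_ge0.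
  by rewrite divr_ge0 ?mulr_ge0 ?addr_ge0 ?d0 ?sqrtr_ge0 ?(ltW Lg_gt0) ?(ltW gdec_gt0).
apply: (le_dist0_sqr (residual_small k)) => //; first by rewrite invr_ge0 mulr_ge0 ?(ltW Lund_gt0).
move=> _ /residual_subgrad[s Hs ->]; apply: le_trans (phi_gap_le rxs Hs) _.
rewrite ler_wpM2l ?invr_ge0 ?mulr_ge0 ?(ltW Lund_gt0) //.
by rewrite ler_sqr ?nnegrE ?addr_ge0 ?enorm_ge0 ?residual_shift_le.
Qed.

Lemma Phi_gap_bound k xs : argmin_Phi k xs ->
  (Phi dg h r (x k) (y k) (eta k) - Phi dg h r xs (y k) (eta k) <=
    if k is k'.+1 then
      ((2 * Lund)^-1 * (eps k' + 3 * Lg * (delta k + delta k') / (gdec * Num.sqrt c)) ^+ 2)%:E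
    else
      ((2 * Lund)^-1)%:E * (dist0 (subdiff F (x 0%N)) * dist0 (subdiff F (x 0%N))))%E.
Proof. by case: k => [|k]; [exact: Phi_gap_le0 | exact: Phi_gap_leS]. Qed.

End InexactAPG.

Theorem lemma4p2 (R : realType) (n : nat)
  (g h : 'rV[R]_n -> R) (r : 'rV[R]_n -> \bar R)
  (dg dh : 'rV[R]_n -> 'rV[R]_n)
  (mu Lg Lh gdec Lund c : R)
  (xstar : 'rV[R]_n)
  (x z y : nat -> 'rV[R]_n) (eta alpha gamma eps : nat -> R) :
  0 < mu -> 0 < Lg ->
  convex_fun g -> strongly_convex mu g ->
  is_gradient g dg -> lipschitz_map Lg dg ->
  convex_fun h -> is_gradient h dh -> lipschitz_map Lh dh ->
  proper_fun r -> closed_efun r -> convex_efun r ->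
  let H := fun v => ((h v)%:E + r v)%E in
  let F := fun v => ((g v)%:E + H v)%E in
  (forall v, (F xstar <= F v)%E) ->
  0 < gdec < 1 -> 0 < Lund -> mu <= Lund -> Lund <= Lg ->
  x 0%N = z 0%N -> (r (x 0%N) < +oo)%E -> mu <= gamma 0%N ->
  (forall k, 0 < eta k /\ 0 < alpha k /\ 0 < gamma k /\ 0 <= eps k) ->
  (forall k, gdec / Lg < eta k <= Lund^-1) ->
  (forall k, gamma k.+1 = alpha k ^+ 2 / eta k /\
             gamma k.+1 = (1 - alpha k) * gamma k + alpha k * mu) ->
  (forall k, y k = (alpha k * gamma k + gamma k.+1)^-1 *:
                   (alpha k * gamma k *: z k + gamma k.+1 *: x k)) ->
  (forall k, (dist0 [set (dg (y k) + (eta k)^-1 *: (x k.+1 - y k) + s)%R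
                    | s in subdiff H (x k.+1)] <= (eps k)%:E)%E) ->
  (forall k, g (x k.+1) <= g (y k) + dot (dg (y k)) (x k.+1 - y k)
                          + (2 * eta k)^-1 * enorm (x k.+1 - y k) ^+ 2) ->
  (forall k, z k.+1 = x k + (alpha k)^-1 *: (x k.+1 - x k)) ->
  0 < c < 1 -> 0 < eps 0%N ->
  (forall k, (1 <= k)%N ->
     eps k = eps 0%N / k.+1%:R * Num.sqrt (\prod_(j < k) (1 - c * alpha j))) ->
  let kappa := Lg / (gdec * mu) in
  let psi0 := fine (F (x 0%N) - F xstar)%E
              + (1 - (1 - c) * alpha 0%N) * (gamma 0%N / 2)
                * enorm (xstar - z 0%N) ^+ 2 in
  let S := Num.sqrt kappa / (2 * (1 - c) ^+ 2 * Lund)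
           * \big[+%R/0%R]_(k <oo) (eps 0%N ^+ 2 / (k.+1%:R) ^+ 2) in
  let delta := fun k : nat =>
     Num.sqrt (\prod_(j < k) (1 - c * alpha j))
     * Num.sqrt (2 * (psi0 + S) / mu) in
  forall (k : nat) (xs : 'rV[R]_n),
    (* xs = x_*^{(k+1)} = argmin_x Phi(x; y^(k), eta_k) *)
    (forall v, (Phi dg h r xs (y k) (eta k) <= Phi dg h r v (y k) (eta k))%E) ->
    (Phi dg h r (x k) (y k) (eta k) - Phi dg h r xs (y k) (eta k) <=
      if k is k'.+1 then
        ((2 * Lund)^-1 *
          (eps k' + 3 * Lg * (delta k + delta k') / (gdec * Num.sqrt c)) ^+ 2)%:E
      else
        ((2 * Lund)^-1)%:E * (dist0 (subdiff F (x 0%N)) * dist0 (subdiff F (x 0%N))))%E.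
Proof.
move=> mu_gt0 Lg_gt0 _ g_sconvex g_grad g_lip h_convex _ _ r_proper _ r_convex H F xstar_min
  /andP[gdec_gt0 gdec_lt1] Lund_gt0 mu_le_Lund _ x0_z0 r_x0 mu_le_gamma0 iter_pos eta_bounds
  gamma_rec y_def residual_small descent z_def /andP[c_gt0 c_lt1] _ eps_def
  kappa psi0 S delta k xs.
have eta_gt0 j : 0 < eta j by case: (iter_pos j).
have alpha_gt0 j : 0 < alpha j by case: (iter_pos j) => _ [].
have gamma_gt0 j : 0 < gamma j by case: (iter_pos j) => _ [_ []].
have eta_gt j : gdec / Lg < eta j by case/andP: (eta_bounds j).
have eta_le j : eta j <= Lund^-1 by case/andP: (eta_bounds j).
exact: (Phi_gap_bound mu_gt0 Lg_gt0 g_sconvex g_grad g_lip h_convex r_proper r_convex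
  xstar_min gdec_gt0 (ltW gdec_lt1) Lund_gt0 mu_le_Lund x0_z0 r_x0 mu_le_gamma0
  eta_gt0 alpha_gt0 gamma_gt0 eta_gt eta_le (fun j => (gamma_rec j).1) (fun j => (gamma_rec j).2)
  y_def residual_small descent z_def c_gt0 c_lt1 eps_def).
Qed.
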